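(* Let $\Delta\vdash t$ be a closed nominal term-in-context and $\sigma$ a nominal substitution satisfying $\Delta$ (i.e., $\vdash a\#X\sigma$ for all $a\#X\in\Delta$) with domain contained in the variables of $t$ and $t\sigma$ ground. Let $\hat\sigma=\mathcal{T}^{s}(\Delta,t,\sigma)$. Then for every subterm $t'$ of $t$ (in particular $t'=t$), $[\![t'\sigma]\!]^{\Delta}_{\Lambda_t}=\hat\sigma([\![t']\!]^{\Delta}_{\Lambda_t})$.
   Context: Nominal terms: $s,t ::= a \mid \pi\cdot X \mid [a]s \mid f\,s \mid (s_1,\ldots,s_n)$ over atoms, variables, function symbols and finite-support permutations $\pi$ of atoms acting on terms in the usual nominal way. A freshness context $\Delta$ is a set of constraints $a\#X$; freshness judgements $\vdash a\#s$ are the standard nominal ones. Substitutions map variables to terms and are applied without avoiding capture, $(\pi\cdot X)\sigma=\pi\cdot(X\sigma)$. $\Delta\vdash t$ is closed if: (1) every atom occurrence $a$ in $t$ lies under an abstraction $[a]$; (2) if $\pi\cdot X$ is in the scope of an abstraction of $\pi(a)$ then every occurrence $\pi'\cdot X$ of $X$ in $t$ is in the scope of an abstraction of $\pi'(a)$, or $a\#X\in\Delta$; (3) for two occurrences $\pi_1\cdot X,\pi_2\cdot X$ and $a$ with $\pi_1(a)\neq\pi_2(a)$, if $a$ is not abstracted in one of the occurrences then $a\#X\in\Delta$. CRS: meta-terms $a\mid Z(t_1,\dots,t_n)\mid[a]t\mid f\,t\mid(t_1,\dots,t_n)$ modulo bound-variable renaming; a valuation assigns to an $n$-ary meta-variable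 a substitute $\underline{\lambda}(a_1,\dots,a_n).s$, and $\hat\sigma(Z(u_1,\dots,u_n))$ is $s$ with each $a_i$ replaced capture-avoidingly by $\hat\sigma(u_i)$, $\hat\sigma$ homomorphic on other constructs. Translation: $\Lambda_t(X)$ is the set of atoms $a$ such that some occurrence of $X$ in $t$ is in the scope of $[a]$ (a map from variables to sets of atoms). Fix a total order on atoms. For a map $\Lambda$ from variables to atom sets, $[\![\cdot]\!]^{\Delta}_{\Lambda}$ keeps atoms, abstractions, function applications and tuples unchanged and maps $\pi\cdot X$ to $X(\pi\cdot xs)$, where $xs$ is the ascending list of $\{\pi^{-1}(a)\mid a\in\Lambda(X)\}\setminus\{a\mid a\#X\in\Delta\}$ and $\pi$ is applied elementwise (no arguments if empty). Substitution translation: for $\sigma=[X_i\mapsto t_i]$, $\mathcal{T}^{s}(\Delta,t,\sigma)=[X_i\mapsto\underline{\lambda}(\pi_i\cdot xs_i).s_i]$, where $\pi_i$ is the permutation of the leftmost occurrence $\pi_i\cdot X_i$ of $X_i$ in $t$, $xs_i$ is the ascending list of $\{\pi_i^{-1}(a)\mid a\in\Lambda_t(X_i)\}\setminus\{a\mid a\#X_i\in\Delta\}$, and $s_i=[\![\pi_i\cdot t_i]\!]^{\Delta}_{\Lambda_{\pi_i\cdot t_i}}$. *)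

From Stdlib Require List.
From mathcomp Require Import all_boot.
Set Implicit Arguments. Unset Strict Implicit. Unset Printing Implicit Defensive.

(* Atoms, variables (= CRS meta-variables) and function symbols are nats;
   the fixed total order on atoms is the usual order [leq] on nat. *)
Definition atom := nat.
Definition var := nat.
Definition fsym := nat.

(* Finite-support permutations of atoms, represented as finite lists of
   swaps (every finite-support permutation is such a composition).
   The head swap is applied last. *)
Definition perm := seq (atom * atom).
Definition swap (s : atom * atom) (c : atom) : atom :=
  if c == s.1 then s.2 else if c == s.2 then s.1 else c.
Fixpoint perm_act (p : perm) (c : atom) : atom :=
  if p is s :: p' then swap s (perm_act p' c) else c.
Definition perm_inv (p : perm) : perm := rev p.

Inductive nterm : Type :=
| NAtom : atom -> nterm
| NSusp : perm -> var -> nterm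
| NAbs  : atom -> nterm -> nterm
| NApp  : fsym -> nterm -> nterm
| NTup  : seq nterm -> nterm.

Fixpoint pact (p : perm) (t : nterm) : nterm :=
  match t with
  | NAtom a => NAtom (perm_act p a)
  | NSusp q X => NSusp (p ++ q) X
  | NAbs a s => NAbs (perm_act p a) (pact p s)
  | NApp f s => NApp f (pact p s)
  | NTup ts => NTup (map (pact p) ts)
  end.

(* freshness contexts: a # X is the pair (a, X) *)
Definition fctx := seq (atom * var).

Fixpoint fresh (D : fctx) (a : atom) (t : nterm) : bool :=
  match t with
  | NAtom b => a != b
  | NSusp p X => (perm_act (perm_inv p) a, X) \in D
  | NAbs b s => (a == b) || fresh D a s
  | NApp _ s => fresh D a s
  | NTup ts => all (fresh D a) ts
  end.

(* nominal substitutions (finite domain given by the hypotheses);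
   applied without avoiding capture *)
Definition nsubst := var -> option nterm.
Fixpoint napply (sg : nsubst) (t : nterm) : nterm :=
  match t with
  | NAtom a => NAtom a
  | NSusp p X => if sg X is Some u then pact p u else NSusp p X
  | NAbs a s => NAbs a (napply sg s)
  | NApp f s => NApp f (napply sg s)
  | NTup ts => NTup (map (napply sg) ts)
  end.

(* occurrences, left to right (pre-order), together with the list of atoms
   abstracted above the occurrence *)
Fixpoint atom_occs (bs : seq atom) (t : nterm) : seq (atom * seq atom) :=
  match t with
  | NAtom a => [:: (a, bs)]
  | NSusp _ _ => [::]
  | NAbs b s => atom_occs (b :: bs) s
  | NApp _ s => atom_occs bs s
  | NTup ts => flatten (map (atom_occs bs) ts)
  end.

Fixpoint var_occs (bs : seq atom) (t : nterm) : seq (perm * var * seq atom) :=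
  match t with
  | NAtom _ => [::]
  | NSusp p X => [:: (p, X, bs)]
  | NAbs b s => var_occs (b :: bs) s
  | NApp _ s => var_occs bs s
  | NTup ts => flatten (map (var_occs bs) ts)
  end.

Definition vars (t : nterm) : seq var := [seq o.1.2 | o <- var_occs [::] t].
Definition ground (t : nterm) : Prop := var_occs [::] t = [::].

Inductive subterm : nterm -> nterm -> Prop :=
| subterm_refl t : subterm t t
| subterm_abs t a s : subterm t s -> subterm t (NAbs a s)
| subterm_app t f s : subterm t s -> subterm t (NApp f s)
| subterm_tup t s ts : List.In s ts -> subterm t s -> subterm t (NTup ts).

Definition closed_term (D : fctx) (t : nterm) : Prop :=
  (forall a bs, (a, bs) \in atom_occs [::] t -> a \in bs) /\
  (forall p X bs a, (p, X, bs) \in var_occs [::] t -> perm_act p a \in bs ->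
     forall p' bs', (p', X, bs') \in var_occs [::] t ->
       perm_act p' a \in bs' \/ (a, X) \in D) /\
  (forall p1 bs1 p2 bs2 X a,
     (p1, X, bs1) \in var_occs [::] t -> (p2, X, bs2) \in var_occs [::] t ->
     perm_act p1 a != perm_act p2 a ->
     (perm_act p1 a \notin bs1 \/ perm_act p2 a \notin bs2) ->
     (a, X) \in D).

Definition satisfies (sg : nsubst) (D : fctx) : Prop :=
  forall a X, (a, X) \in D -> fresh [::] a (napply sg (NSusp [::] X)).

Definition abs_map := var -> seq atom.
Definition Lambda (t : nterm) : abs_map :=
  fun X => flatten [seq o.2 | o <- var_occs [::] t & o.1.2 == X].

Inductive mterm : Type :=
| MAtom : atom -> mterm
| MMeta : var -> seq mterm -> mterm
| MAbs  : atom -> mterm -> mterm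
| MApp  : fsym -> mterm -> mterm
| MTup  : seq mterm -> mterm.

Fixpoint matoms (t : mterm) : seq atom :=
  match t with
  | MAtom a => [:: a]
  | MMeta _ us => flatten (map matoms us)
  | MAbs a s => a :: matoms s
  | MApp _ s => matoms s
  | MTup ts => flatten (map matoms ts)
  end.

Definition fresh_atom (l : seq atom) : atom := (foldr maxn 0 l).+1.

Fixpoint lookup (th : seq (atom * mterm)) (a : atom) : option mterm :=
  if th is (b, u) :: th' then (if a == b then Some u else lookup th' a)
  else None.

(* capture-avoiding simultaneous substitution of atoms by meta-terms
   (binders are always renamed to a fresh atom) *)
Fixpoint msubst (th : seq (atom * mterm)) (t : mterm) : mterm :=
  match t with
  | MAtom a => if lookup th a is Some u then u else MAtom a
  | MMeta Z us => MMeta Z (map (msubst th) us)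
  | MAbs a s =>
      let c := fresh_atom (a :: matoms s ++ map fst th
                            ++ flatten (map (fun p => matoms p.2) th)) in
      MAbs c (msubst ((a, MAtom c) :: th) s)
  | MApp f s => MApp f (msubst th s)
  | MTup ts => MTup (map (msubst th) ts)
  end.

Fixpoint var_rel (E : seq (atom * atom)) (a b : atom) : bool :=
  if E is (x, y) :: E' then
    (if x == a then y == b else if y == b then false else var_rel E' a b)
  else a == b.

Fixpoint aeq_env (E : seq (atom * atom)) (s t : mterm) : bool :=
  match s, t with
  | MAtom a, MAtom b => var_rel E a b
  | MMeta Z us, MMeta Z' vs => (Z == Z') && all2 (aeq_env E) us vs
  | MAbs a s', MAbs b t' => aeq_env ((a, b) :: E) s' t'
  | MApp f s', MApp g t' => (f == g) && aeq_env E s' t'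
  | MTup us, MTup vs => all2 (aeq_env E) us vs
  | _, _ => false
  end.
Definition aeq (s t : mterm) : Prop := aeq_env [::] s t.

(* valuations: Z |-> \lambda(a1,...,an).s *)
Definition valuation := var -> option (seq atom * mterm).
Fixpoint valapp (V : valuation) (t : mterm) : mterm :=
  match t with
  | MAtom a => MAtom a
  | MMeta Z us =>
      let us' := map (valapp V) us in
      if V Z is Some (bs, s) then msubst (zip bs us') s else MMeta Z us'
  | MAbs a s => MAbs a (valapp V s)
  | MApp f s => MApp f (valapp V s)
  | MTup ts => MTup (map (valapp V) ts)
  end.

Definition xs_of (D : fctx) (L : abs_map) (p : perm) (X : var) : seq atom :=
  sort leq (undup [seq b <- [seq perm_act (perm_inv p) a | a <- L X]
                   | (b, X) \notin D]).

Fixpoint trans (D : fctx) (L : abs_map) (t : nterm) : mterm :=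
  match t with
  | NAtom a => MAtom a
  | NSusp p X => MMeta X (map (fun a => MAtom (perm_act p a)) (xs_of D L p X))
  | NAbs a s => MAbs a (trans D L s)
  | NApp f s => MApp f (trans D L s)
  | NTup ts => MTup (map (trans D L) ts)
  end.

Definition leftmost_perm (t : nterm) (X : var) : option perm :=
  ohead [seq o.1.1 | o <- var_occs [::] t & o.1.2 == X].

Definition trans_subst (D : fctx) (t : nterm) (sg : nsubst) : valuation :=
  fun X =>
    match sg X, leftmost_perm t X with
    | Some u, Some p =>
        Some (map (perm_act p) (xs_of D (Lambda t) p X),
              trans D (Lambda (pact p u)) (pact p u))
    | _, _ => None
    end.

(* For a suspension pi.X of t, the left-hand side is the translation of the
   ground term pi.(X sigma), while the right-hand side is the translation of
   pi_X.(X sigma) with the atoms pi_X(xs) renamed to pi(xs), pi_X being the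
   leftmost permutation on X.  Closedness of t makes xs independent of the
   occurrence of X and forces pi and pi_X to agree on every atom c outside xs
   with c#X not in Delta; since sigma satisfies Delta, the atoms c with c#X in
   Delta do not occur free in X sigma.  So the renaming agrees with the action
   of pi on every free atom, and both sides are alpha-equivalent. *)

From mathcomp Require Import all_boot.
Set Implicit Arguments. Unset Strict Implicit. Unset Printing Implicit Defensive.

Section NtermInd.
Variable P : nterm -> Prop.
Hypothesis P_atom : forall a, P (NAtom a).
Hypothesis P_susp : forall p X, P (NSusp p X).
Hypothesis P_abs : forall a s, P s -> P (NAbs a s).
Hypothesis P_app : forall f s, P s -> P (NApp f s).
Hypothesis P_tup : forall ts, (forall s, List.In s ts -> P s) -> P (NTup ts).

Fixpoint nterm_ind_in (t : nterm) : P t :=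
  match t with
  | NAtom a => P_atom a
  | NSusp p X => P_susp p X
  | NAbs a s => P_abs a (nterm_ind_in s)
  | NApp f s => P_app f (nterm_ind_in s)
  | NTup ts => P_tup ((fix in_ts (l : seq nterm) : forall s, List.In s l -> P s :=
       match l with
       | nil => fun s H => False_ind _ H
       | cons x l' => fun s H => match H with
            | or_introl e => eq_ind x P (nterm_ind_in x) s e
            | or_intror H' => in_ts l' s H' end
       end) ts)
  end.
End NtermInd.

Lemma all_In (A : Type) (P : pred A) l : all P l <-> forall x, List.In x l -> P x.
Proof.
elim: l => //= y l IH; split => [/andP[Py /IH Pl] x [<-|/Pl]|Pl] //.
by rewrite Pl /=; [apply/IH => x lx; apply: Pl; right | left].
Qed.

Lemma notall_In (A : Type) (P : pred A) l :
  ~~ all P l -> exists2 x, List.In x l & ~~ P x.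
Proof.
elim: l => //= y l IH; rewrite negb_and => /orP[Py|/IH[x lx Px]].
  by exists y => //; left.
by exists x => //; right.
Qed.

Lemma flatten_map_In (A : Type) (B : eqType) (f : A -> seq B) l y :
  y \in flatten (map f l) <-> exists2 x, List.In x l & y \in f x.
Proof.
elim: l => [|x l IH] /=; first by split=> // -[].
rewrite mem_cat; split => [/orP[yfx|/IH[z lz yfz]]|[z [<-|lz] yfz]].
- by exists x => //; left.
- by exists z => //; right.
- by rewrite yfz.
- by apply/orP; right; apply/IH; exists z.
Qed.

Lemma flatten_map_nil (A B : Type) (f : A -> seq B) l x :
  flatten (map f l) = [::] -> List.In x l -> f x = [::].
Proof.
elim: l => //= y l IH; case fy: (f y) => //= fl.
by case=> [<-|/(IH fl)].
Qed.

Lemma all2_map_In (A B : Type) (r : rel B) (f g : A -> B) l :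
  (forall x, List.In x l -> r (f x) (g x)) -> all2 r (map f l) (map g l).
Proof.
elim: l => //= x l IH rfg; rewrite rfg /=; last by left.
by apply: IH => y ly; apply: rfg; right.
Qed.

Lemma swapK s : involutive (swap s).
Proof.
case: s => x y c; rewrite /swap /=.
have [->|cx] := eqVneq c x; first by rewrite eqxx; case: eqVneq.
have [->|cy] := eqVneq c y; first by rewrite eqxx.
by rewrite (negbTE cx) (negbTE cy).
Qed.

Lemma perm_act_cat p q c : perm_act (p ++ q) c = perm_act p (perm_act q c).
Proof. by elim: p => //= s p ->. Qed.

Lemma perm_actK p : cancel (perm_act p) (perm_act (perm_inv p)).
Proof.
elim: p => //= s p IH c.
by rewrite /perm_inv rev_cons -cats1 perm_act_cat /= swapK IH.
Qed.

Lemma perm_actKV p : cancel (perm_act (perm_inv p)) (perm_act p).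
Proof. by move=> c; have := perm_actK (rev p) c; rewrite /perm_inv revK. Qed.

Lemma perm_act_inj p : injective (perm_act p).
Proof. exact: can_inj (perm_actK p). Qed.

Lemma pact_nil u : pact [::] u = u.
Proof.
elim/nterm_ind_in: u => //= [a s -> | f s -> | ts IH] //; congr NTup.
by rewrite -[RHS]map_id; apply: List.map_ext_in.
Qed.

Lemma var_occs_rebind s B p X bs : (p, X, bs) \in var_occs B s ->
  forall B', exists bs', (p, X, bs') \in var_occs B' s.
Proof.
elim/nterm_ind_in: s B => /=.
- by move=> a B; rewrite in_nil.
- by move=> q Y B; rewrite inE => /eqP [-> -> _] B'; exists B'; rewrite inE.
- by move=> a s IH B /IH occ B'; apply: occ.
- by move=> f s IH B /IH occ B'; apply: occ.
- move=> ts IH B /flatten_map_In [x xts occ] B'.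
  have [bs' ?] := IH x xts B occ B'.
  by exists bs'; apply/flatten_map_In; exists x.
Qed.

Lemma subterm_var_occs t' t B p X bs : subterm t' t ->
  (p, X, bs) \in var_occs B t' -> exists bs', (p, X, bs') \in var_occs [::] t.
Proof.
move=> sub; elim: sub B bs => {t' t} [t|t a s _ IH|t f s _ IH|t s ts sts _ IH] B bs.
- by move=> /var_occs_rebind; apply.
- by move=> /IH [bs' /var_occs_rebind]; apply.
- by move=> /IH [bs' /var_occs_rebind]; apply.
- move=> /IH [bs' /var_occs_rebind /(_ [::]) [bs'' occ]]; exists bs''.
  by apply/flatten_map_In; exists s.
Qed.

Fixpoint nground (t : nterm) : bool :=
  match t with
  | NAtom _ => true
  | NSusp _ _ => false
  | NAbs _ s => nground s
  | NApp _ s => nground s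
  | NTup ts => all nground ts
  end.

Fixpoint mterm_of (t : nterm) : mterm :=
  match t with
  | NAtom a => MAtom a
  | NSusp _ X => MMeta X [::]
  | NAbs a s => MAbs a (mterm_of s)
  | NApp f s => MApp f (mterm_of s)
  | NTup ts => MTup (map mterm_of ts)
  end.

Lemma nground_pact p u : nground (pact p u) = nground u.
Proof.
elim/nterm_ind_in: u => //= ts IH; rewrite all_map.
by apply/idP/idP => /all_In all_ts; apply/all_In => x xts /=;
  [rewrite -IH | rewrite IH] => //; apply: all_ts.
Qed.

Lemma trans_nground D L g : nground g -> trans D L g = mterm_of g.
Proof.
elim/nterm_ind_in: g => //= [a s IH /IH -> | f s IH /IH -> | ts IH /all_In gts] //.
by congr MTup; apply: List.map_ext_in => x xts; apply: IH (gts x xts).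
Qed.

Lemma nground_var_occs_nil g B : var_occs B g = [::] -> nground g.
Proof.
elim/nterm_ind_in: g B => //= [a s IH B /IH | ts IH B occs0] //.
by apply/all_In => x xts; apply: (IH x xts B); apply: flatten_map_nil xts.
Qed.

Lemma ground_napply_var_occs sg s B : var_occs B (napply sg s) = [::] ->
  forall p X bs, (p, X, bs) \in var_occs B s ->
  exists2 u, sg X = Some u & nground u.
Proof.
elim/nterm_ind_in: s B => /=.
- by move=> a B _ p X bs; rewrite in_nil.
- move=> q Y B; case sgY: (sg Y) => [u|] //= occs0 p X bs.
  rewrite inE => /eqP [_ -> _]; exists u => //.
  by rewrite -(nground_pact q); apply: nground_var_occs_nil occs0.
- by move=> a s IH B /IH.
- by move=> f s IH B /IH.
- move=> ts IH B occs0 p X bs /flatten_map_In [x xts occ].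
  apply: (IH x xts B _ p X bs occ).
  by move: occs0; rewrite -map_comp => occs0; apply: (flatten_map_nil occs0).
Qed.

Lemma not_fresh_matoms p c s : nground s -> ~~ fresh [::] c s ->
  perm_act p c \in matoms (mterm_of (pact p s)).
Proof.
elim/nterm_ind_in: s => //=.
- by move=> a _; rewrite negbK => /eqP ->; rewrite inE.
- by move=> a s IH gs; rewrite negb_or inE => /andP[_ cs]; rewrite IH ?orbT.
- move=> ts IH /all_In gts /notall_In [x xts cx].
  apply/(flatten_map_In matoms); exists (mterm_of (pact p x)).
    by apply: List.in_map; apply: List.in_map.
  by apply: IH => //; apply: gts.
Qed.

Lemma fresh_atom_neq x l : x \in l -> x != fresh_atom l.
Proof.
move=> xl; rewrite neq_ltn ltnS /fresh_atom; apply/orP; left.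
elim: l xl => //= y l IH; rewrite inE => /orP[/eqP ->|/IH]; first exact: leq_maxl.
by move/leq_trans; apply; apply: leq_maxr.
Qed.

Lemma lookup_matoms th x u : lookup th x = Some u ->
  {subset matoms u <= flatten (map (fun p => matoms p.2) th)}.
Proof.
elim: th => //= [[b v]] th IH; case: eqP => _ => [[<-] y|/IH sub y /sub] yu.
  by rewrite mem_cat yu.
by rewrite mem_cat yu orbT.
Qed.

Lemma msubst_atom th x d : msubst th (MAtom x) = MAtom d ->
  d = x \/ d \in flatten (map (fun p => matoms p.2) th).
Proof.
rewrite /=; case thx: (lookup th x) => [u|] => [ud|[]]; last by left.
by right; apply: (lookup_matoms thx); rewrite ud inE.
Qed.

Lemma aeq_env_pact_msubst p q g E th : nground g ->
  (forall c, ~~ fresh [::] c g -> exists2 d,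
     msubst th (MAtom (perm_act q c)) = MAtom d & var_rel E (perm_act p c) d) ->
  aeq_env E (mterm_of (pact p g)) (msubst th (mterm_of (pact q g))).
Proof.
elim/nterm_ind_in: g E th => //=.
- move=> a E th _ rel_th; have [|d -> //] := rel_th a.
  by rewrite /= eqxx.
- move=> a s IH E th gs rel_th; set cf := fresh_atom _.
  apply: IH => // c cs; have [->|ca] := eqVneq c a.
    by exists cf; rewrite /= !eqxx.
  have [|d thd Ed] := rel_th c; first by rewrite /= negb_or ca.
  have qca : (perm_act q c == perm_act q a) = false.
    by apply: contraNF ca => /eqP /perm_act_inj ->.
  have pac : (perm_act p a == perm_act p c) = false.
    by apply: contraNF ca => /eqP /perm_act_inj ->.
  have cfd : (cf == d) = false.
    rewrite eq_sym; apply/negbTE/fresh_atom_neq; rewrite inE !mem_cat.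
    by case: (msubst_atom thd) => [->|->]; rewrite ?not_fresh_matoms ?orbT.
  by exists d; rewrite /= ?qca // pac cfd.
- move=> f s IH E th gs rel_th; rewrite eqxx; exact: IH.
- move=> ts IH E th /all_In gts rel_th; rewrite -!map_comp.
  apply: all2_map_In => x xts /=; apply: IH => [//||c cx]; first exact: gts.
  apply: rel_th.
  by apply: contra cx => /all_In; apply.
Qed.

Lemma mem_Lambda t X a :
  reflect (exists q bs, (q, X, bs) \in var_occs [::] t /\ a \in bs) (a \in Lambda t X).
Proof.
apply: (iffP flattenP) => [[bs /mapP [[[q Y] bs'] + ->] abs]|[q [bs [occ abs]]]].
  by rewrite mem_filter /= => /andP[/eqP -> occ]; exists q, bs'.
by exists bs => //; apply/mapP; exists (q, X, bs); rewrite // mem_filter /= eqxx.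
Qed.

Lemma mem_xs_of D L p X c :
  (c \in xs_of D L p X) = ((c, X) \notin D) && (perm_act p c \in L X).
Proof.
rewrite /xs_of mem_sort mem_undup mem_filter; congr andb.
apply/mapP/idP => [[a aL ->]|pcL]; first by rewrite perm_actKV.
by exists (perm_act p c); rewrite ?perm_actK.
Qed.

Lemma var_rel_id E a b : all (fun e => e.1 == e.2) E -> var_rel E a b = (a == b).
Proof.
elim: E => //= [[x y]] E IH /andP[/eqP /= <- idE]; rewrite IH //.
have [<-|xa] := eqVneq x a; first by rewrite eq_sym.
by have [<-|//] := eqVneq x b; rewrite eq_sym (negbTE xa).
Qed.

Lemma lookup_zip_perm q p xs c :
  lookup (zip (map (perm_act q) xs) (map (fun a => MAtom (perm_act p a)) xs))
         (perm_act q c)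
  = if c \in xs then Some (MAtom (perm_act p c)) else None.
Proof.
elim: xs => //= x xs IH; rewrite inE IH.
have [->|cx] := eqVneq c x; first by rewrite eqxx.
by rewrite (inj_eq (@perm_act_inj q)) (negbTE cx).
Qed.

Lemma leftmost_permP t X p bs : (p, X, bs) \in var_occs [::] t ->
  exists q bq, leftmost_perm t X = Some q /\ (q, X, bq) \in var_occs [::] t.
Proof.
rewrite /leftmost_perm => occ.
have : p \in [seq o.1.1 | o <- var_occs [::] t & o.1.2 == X].
  by apply/mapP; exists (p, X, bs); rewrite // mem_filter /= eqxx.
case perms: [seq o.1.1 | o <- var_occs [::] t & o.1.2 == X] => [|q l] //= _.
have : q \in q :: l by rewrite inE eqxx.
rewrite -perms => /mapP [[[r Y] br]]; rewrite mem_filter /= => /andP[/eqP -> occ'] ->.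
by exists r, br.
Qed.

Section ClosedTerm.
Variables (D : fctx) (t : nterm).
Hypothesis t_closed : closed_term D t.
Let occs := var_occs [::] t.

Lemma closed_Lambda_abstracted r X br c : (r, X, br) \in occs -> (c, X) \notin D ->
  perm_act r c \in Lambda t X ->
  forall r' br', (r', X, br') \in occs -> perm_act r' c \in br'.
Proof.
case: t_closed => _ [C2 C3] occ_r cXD /mem_Lambda [q [bq [occ_q qc]]] r' br' occ_r'.
have [qcb|qcb] := boolP (perm_act q c \in bq).
  by have [//|] := C2 q X bq c occ_q qcb r' br' occ_r'; rewrite (negbTE cXD).
have [qr|qr] := eqVneq (perm_act q c) (perm_act r c); first by rewrite qr qc in qcb.
by have := C3 q bq r br X c occ_q occ_r qr (or_introl qcb); rewrite (negbTE cXD).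
Qed.

Lemma closed_xs_of_occ p bp q bq X : (p, X, bp) \in occs -> (q, X, bq) \in occs ->
  xs_of D (Lambda t) p X = xs_of D (Lambda t) q X.
Proof.
move=> occ_p occ_q.
have same_xs c : (c \in xs_of D (Lambda t) p X) = (c \in xs_of D (Lambda t) q X).
  rewrite !mem_xs_of; have [cXD|] //= := boolP ((c, X) \notin D).
  apply/idP/idP => cL; apply/mem_Lambda.
    by exists q, bq; split; last apply: closed_Lambda_abstracted occ_p cXD cL _ _ occ_q.
  by exists p, bp; split; last apply: closed_Lambda_abstracted occ_q cXD cL _ _ occ_p.
apply: (sorted_eq leq_trans anti_leq); try exact: (sort_sorted leq_total).
by apply: uniq_perm; rewrite ?sort_uniq ?undup_uniq.
Qed.

Lemma closed_perm_act_outside_xs p bp q bq X c :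
  (p, X, bp) \in occs -> (q, X, bq) \in occs -> (c, X) \notin D ->
  c \notin xs_of D (Lambda t) q X -> perm_act q c = perm_act p c.
Proof.
case: t_closed => _ [_ C3] occ_p occ_q cXD; rewrite mem_xs_of cXD /= => qcL.
have qcb : perm_act q c \notin bq by apply: contra qcL => qcb; apply/mem_Lambda; exists q, bq.
have [//|qp] := eqVneq (perm_act q c) (perm_act p c).
by have := C3 q bq p bp X c occ_q occ_p qp (or_introl qcb); rewrite (negbTE cXD).
Qed.

End ClosedTerm.

Section Translation.
Variables (D : fctx) (t : nterm) (sg : nsubst).
Hypothesis t_closed : closed_term D t.
Hypothesis sg_sat : satisfies sg D.
Hypothesis t_sg_ground : ground (napply sg t).

Lemma trans_napply_susp p X bp E : (p, X, bp) \in var_occs [::] t ->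
  all (fun e => e.1 == e.2) E ->
  aeq_env E (trans D (Lambda t) (napply sg (NSusp p X)))
            (valapp (trans_subst D t sg) (trans D (Lambda t) (NSusp p X))).
Proof.
move=> occ_p idE.
have [u sgX gu] := ground_napply_var_occs t_sg_ground occ_p.
have [q [bq [lmX occ_q]]] := leftmost_permP occ_p.
rewrite /= sgX /trans_subst sgX lmX -map_comp /=.
rewrite !trans_nground ?nground_pact // (closed_xs_of_occ t_closed occ_p occ_q).
apply: aeq_env_pact_msubst => // c cu.
have cXD : (c, X) \notin D.
  by apply: contra cu => /sg_sat; rewrite /= sgX pact_nil.
rewrite /= lookup_zip_perm; case: ifP => cxs.
  by exists (perm_act p c); rewrite ?var_rel_id.
exists (perm_act q c) => //.
by rewrite (closed_perm_act_outside_xs t_closed occ_p occ_q cXD (negbT cxs)) var_rel_id.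
Qed.

Lemma trans_napply s B E :
  (forall p X bs, (p, X, bs) \in var_occs B s ->
     exists bs', (p, X, bs') \in var_occs [::] t) ->
  all (fun e => e.1 == e.2) E ->
  aeq_env E (trans D (Lambda t) (napply sg s))
            (valapp (trans_subst D t sg) (trans D (Lambda t) s)).
Proof.
elim/nterm_ind_in: s B E => /=.
- by move=> a B E _ idE; rewrite var_rel_id.
- move=> p X B E occs_t idE.
  have [|bs occ] := occs_t p X B; first by rewrite inE.
  exact: trans_napply_susp occ idE.
- by move=> a s IH B E occs_t idE; apply: (IH (a :: B)); rewrite //= eqxx.
- by move=> f s IH B E occs_t idE; rewrite eqxx; apply: (IH B).
- move=> ts IH B E occs_t idE; rewrite -!map_comp; apply: all2_map_In => x xts /=.
  apply: (IH x xts B) => // p X bs occ; apply: (occs_t p X bs).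
  by apply/flatten_map_In; exists x.
Qed.

End Translation.

Theorem mainTheorem9 (D : fctx) (t : nterm) (sg : nsubst) :
  closed_term D t ->
  satisfies sg D ->
  (forall X u, sg X = Some u -> X \in vars t) ->
  ground (napply sg t) ->
  forall t', subterm t' t ->
    aeq (trans D (Lambda t) (napply sg t'))
        (valapp (trans_subst D t sg) (trans D (Lambda t) t')).
Proof.
move=> t_closed sg_sat _ t_sg_ground t' sub.
apply: (trans_napply t_closed sg_sat t_sg_ground (B := [::])) => // p X bs.
exact: subterm_var_occs sub.
Qed.
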